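(* Assume the demand is i.i.d. with pmf $P_X$ (so $Q(x'\mid x)=P_X(x')$). Given $a\in\mathcal A$ and $\pi\in\mathcal P_{X,S}$, define $\xi(w)=\sum_{(x,s):s-x=w}\pi(x,s)$ for $w\in\mathcal W$, $b(y\mid w)=\frac{\sum_{(x,s):s-x=w}a(y\mid x,s)\pi(x,s)}{\xi(w)}$, and $\tilde a(y\mid x,s)=b(y\mid s-x)$. Then $b\in\mathcal B$, $\tilde a\in\mathcal A$, and (1) for every $y\in\mathcal Y$, $\varphi(\pi,y,a)=\varphi(\pi,y,\tilde a)$; (2) $I(a;\pi)\ge I(\tilde a;\pi)=I(b;\xi)$. Consequently, in the sequential decision problem there is no loss of optimality in restricting attention to actions of the form $\tilde a(y\mid x,s)=b(y\mid s-x)$ with $b\in\mathcal B$.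
   Context: $\mathcal X=\{0,\dots,m_x\}$, $\mathcal Y=\{0,\dots,m_y\}$, $\mathcal S=\{0,\dots,m_s\}$ with $m_x\le m_y$; $\mathcal W=\{s-x:s\in\mathcal S,x\in\mathcal X\}$; $\mathcal Y_\circ(w)=\{y\in\mathcal Y:w+y\in\mathcal S\}$; $\mathcal P_{X,S}$ the pmfs on $\mathcal X\times\mathcal S$. $\mathcal A$: conditional pmfs $a(y\mid x,s)$ with $a(\mathcal Y_\circ(s-x)\mid x,s)=1$. $\mathcal B$: conditional pmfs $b(y\mid w)$ with $b(\mathcal Y_\circ(w)\mid w)=1$; when $\xi(w)=0$, $b(\cdot\mid w)$ is taken to be an arbitrary pmf on $\mathcal Y_\circ(w)$. $I(a;\pi)$ is the mutual information between $(X,S)\sim\pi$ and $Y\sim a(\cdot\mid X,S)$; $I(b;\xi)$ is the mutual information between $W\sim\xi$ and $Y\sim b(\cdot\mid W)$. The filter is $\varphi(\pi,y,a)(x',s')=\frac{\sum_xQ(x'|x)a(y|x,s'+x-y)\pi(x,s'+x-y)}{\sum_{x,s}a(y|x,s)\pi(x,s)}$, i.e. the conditional pmf of $(X_+,S_+)$ given $Y=y$ when $(X,S)\sim\pi$, $Y\sim a(\cdot\mid X,S)$, $S_+=S+Y-X$, $X_+\sim Q(\cdot\mid X)$. The sequential problem: actions $A_t\in\mathcal A$ chosen from $(Y^{t-1},A^{t-1})$, $Y_t\sim A_t(\cdot\mid X_t,S_t)$, $S_{t+1}=S_t+Y_t-X_t$, cost $\frac1T\mathbb E[\sum_tI(A_t;\Pi_t)]$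 with $\Pi_t$ the belief on $(X_t,S_t)$. *)

From mathcomp Require Import all_boot all_order all_algebra.
From mathcomp Require Import reals exp.
Set Implicit Arguments. Unset Strict Implicit. Unset Printing Implicit Defensive.
Import Order.TTheory GRing.Theory Num.Theory.
Local Open Scope ring_scope.

Section Model.
Variables (R : realType) (mx my ms : nat).
(* X = 'I_mx.+1, Y = 'I_my.+1, S = 'I_ms.+1; W is a finite set of integers. *)

Definition Wseq : seq int :=
  undup [seq (s%:Z - x%:Z) | x : 'I_mx.+1 <- enum 'I_mx.+1, s : 'I_ms.+1 <- enum 'I_ms.+1].

Definition Yo (w : int) (y : 'I_my.+1) : bool := (0 <= w + y%:Z <= ms%:Z).

Definition is_pmf (T : finType) (p : T -> R) : Prop :=
  (forall t, 0 <= p t) /\ \sum_t p t = 1.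

Definition pmfXS (pi : 'I_mx.+1 -> 'I_ms.+1 -> R) : Prop :=
  (forall x s, 0 <= pi x s) /\ \sum_x \sum_s pi x s = 1.

Definition pmf_on_Yo (w : int) (p : 'I_my.+1 -> R) : Prop :=
  is_pmf p /\ \sum_(y | Yo w y) p y = 1.

(* the action set A: a x s y = a(y | x, s) *)
Definition inA (a : 'I_mx.+1 -> 'I_ms.+1 -> 'I_my.+1 -> R) : Prop :=
  forall (x : 'I_mx.+1) (s : 'I_ms.+1), pmf_on_Yo (s%:Z - x%:Z) (a x s).

(* the set B: b w y = b(y | w) *)
Definition inB (b : int -> 'I_my.+1 -> R) : Prop :=
  forall w, w \in Wseq -> pmf_on_Yo w (b w).

Definition xi_of (pi : 'I_mx.+1 -> 'I_ms.+1 -> R) (w : int) : R :=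
  \sum_(x : 'I_mx.+1) \sum_(s : 'I_ms.+1 | s%:Z - x%:Z == w) pi x s.

Definition b_numer (a : 'I_mx.+1 -> 'I_ms.+1 -> 'I_my.+1 -> R)
  (pi : 'I_mx.+1 -> 'I_ms.+1 -> R) (w : int) (y : 'I_my.+1) : R :=
  \sum_(x : 'I_mx.+1) \sum_(s : 'I_ms.+1 | s%:Z - x%:Z == w) a x s y * pi x s.

Definition atilde (b : int -> 'I_my.+1 -> R) (x : 'I_mx.+1) (s : 'I_ms.+1)
  (y : 'I_my.+1) : R := b (s%:Z - x%:Z) y.

(* summand p*c*log(c/q) of mutual information, with 0 log 0 = 0 *)
Definition miterm (p c q : R) : R :=
  if p * c == 0 then 0 else p * c * ln (c / q).

Definition MI_A (a : 'I_mx.+1 -> 'I_ms.+1 -> 'I_my.+1 -> R)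
  (pi : 'I_mx.+1 -> 'I_ms.+1 -> R) : R :=
  let q y := \sum_x \sum_s pi x s * a x s y in
  \sum_x \sum_s \sum_y miterm (pi x s) (a x s y) (q y).

Definition MI_B (b : int -> 'I_my.+1 -> R) (xi : int -> R) : R :=
  let q y := \sum_(w <- Wseq) xi w * b w y in
  \sum_(w <- Wseq) \sum_y miterm (xi w) (b w y) (q y).

Definition atS (f : 'I_ms.+1 -> R) (t : int) : R :=
  match t with
  | Posz n => if (n < ms.+1)%N then f (inord n) else 0
  | Negz _ => 0
  end.

(* the filter phi(pi, y, a)(x', s'), with transition kernel Q x' x = Q(x'|x) *)
Definition filt (Q : 'I_mx.+1 -> 'I_mx.+1 -> R)
  (pi : 'I_mx.+1 -> 'I_ms.+1 -> R) (y : 'I_my.+1)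
  (a : 'I_mx.+1 -> 'I_ms.+1 -> 'I_my.+1 -> R)
  (x' : 'I_mx.+1) (s' : 'I_ms.+1) : R :=
  (\sum_x Q x' x * atS (fun s => a x s y) (s'%:Z + x%:Z - y%:Z)
                 * atS (pi x) (s'%:Z + x%:Z - y%:Z))
  / (\sum_x \sum_s a x s y * pi x s).

End Model.

From mathcomp Require Import all_boot all_order all_algebra.
From mathcomp Require Import reals exp.
From mathcomp Require Import ring lra.
Set Implicit Arguments. Unset Strict Implicit.
Import Order.TTheory GRing.Theory Num.Theory.
Local Open Scope ring_scope.

(* Group the pairs (x, s) into the fibers s - x = w.  The numerator of b(y|w)
   is the fiber sum of a(y|x,s) pi(x,s), and it equals xi(w) b(y|w) also when
   xi(w) = 0, because it then vanishes.  With i.i.d. demand, the filter and the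
   output distribution of Y depend on a only through these fiber sums, so they
   are the same for a and a~.  Since a~ is constant on fibers, I(a~; pi)
   collapses to I(b; xi), and I(a; pi) >= I(a~; pi) is the log-sum inequality
   applied to each fiber and each y. *)

Section LogSum.
Variable R : realType.

Lemma ln_le_subr1 (x : R) : 0 < x -> ln x <= x - 1.
Proof. by move=> x_gt0; have := expR_ge1Dx (ln x); rewrite lnK ?posrE //; lra. Qed.

Lemma mul_ln_div_le (c b q : R) : 0 <= c -> 0 < b -> 0 < q ->
  c * ln (b / q) + (c - b) <= c * ln (c / q).
Proof.
move=> c_ge0 b_gt0 q_gt0; have [->|c_neq0] := eqVneq c 0; first by lra.
have c_gt0 : 0 < c by rewrite lt_def c_neq0.
have : c * ln (b / c) <= c * (b / c - 1).
  by apply: ler_wpM2l; [exact: ltW | exact/ln_le_subr1/divr_gt0].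
rewrite [c * (_ - 1)]mulrBr mulr1 mulrCA mulfV // mulr1.
rewrite !ln_div ?posrE //; lra.
Qed.

Lemma log_sum_le (I : finType) (P : pred I) (p c : I -> R) (b q : R) :
  (forall i, 0 <= p i) -> (forall i, 0 <= c i) ->
  \sum_(i | P i) p i * c i = (\sum_(i | P i) p i) * b ->
  \sum_(i | P i) p i * c i <= q ->
  (\sum_(i | P i) p i) * b * ln (b / q) <= \sum_(i | P i) p i * c i * ln (c i / q).
Proof.
move=> p_ge0 c_ge0; set B := \sum_(i | P i) _; set xi := \sum_(i | P i) _.
move=> B_def B_le_q; rewrite -B_def.
have B_ge0 : 0 <= B by rewrite sumr_ge0 // => i _; rewrite mulr_ge0.
have [B0|B_neq0] := eqVneq B 0.
  have pc0 i : P i -> p i * c i = 0.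
    by move=> Pi; apply: (psumr_eq0P _ B0) => // j _; rewrite mulr_ge0.
  by rewrite B0 mul0r big1 // => i /pc0 ->; rewrite mul0r.
have B_gt0 : 0 < B by rewrite lt_def B_neq0.
have xi_gt0 : 0 < xi.
  rewrite lt_def sumr_ge0 // andbT; apply: contra_neq B_neq0 => xi0.
  by rewrite B_def xi0 mul0r.
have b_gt0 : 0 < b by rewrite -(pmulr_rgt0 _ xi_gt0) -B_def.
have q_gt0 : 0 < q by apply: lt_le_trans B_le_q.
have termwise i : P i ->
    p i * (c i * ln (b / q) + (c i - b)) <= p i * c i * ln (c i / q).
  by move=> _; rewrite -mulrA ler_wpM2l // mul_ln_div_le.
apply: le_trans (ler_sum _ termwise).
under eq_bigr do rewrite mulrDr mulrBr mulrA.
rewrite big_split sumrB -!mulr_suml -/B -/xi -B_def /=.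
by rewrite subrr addr0.
Qed.

End LogSum.

Section Model.
Variables (R : realType) (mx my ms : nat).
Implicit Types (x : 'I_mx.+1) (s : 'I_ms.+1) (y : 'I_my.+1) (w : int).

Definition fiber_sum (F : 'I_mx.+1 -> 'I_ms.+1 -> R) w : R :=
  \sum_(x : 'I_mx.+1) \sum_(s : 'I_ms.+1 | s%:Z - x%:Z == w) F x s.

Lemma diff_mem_W x s : s%:Z - x%:Z \in Wseq mx ms.
Proof.
rewrite mem_undup.
by apply: (allpairs_f (fun (x : 'I_mx.+1) (s : 'I_ms.+1) => s%:Z - x%:Z));
  rewrite mem_enum.
Qed.

Lemma fiber_sum_notin F w : w \notin Wseq mx ms -> fiber_sum F w = 0.
Proof.
move=> wNW; rewrite /fiber_sum big1 // => x _; rewrite big_pred0 // => s.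
by apply: contraNF wNW => /eqP <-; apply: diff_mem_W.
Qed.

Lemma sum_fiber_sum F :
  \sum_x \sum_s F x s = \sum_(w <- Wseq mx ms) fiber_sum F w.
Proof.
rewrite /fiber_sum [RHS]exchange_big /=; apply: eq_bigr => x _.
under [RHS]eq_bigr do rewrite big_mkcond /=.
rewrite [RHS]exchange_big /=; apply: eq_bigr => s _.
rewrite (bigD1_seq (s%:Z - x%:Z)) ?undup_uniq ?diff_mem_W //= eqxx big1 ?addr0 //.
by move=> w /negPf; rewrite eq_sym => ->.
Qed.

Lemma fiber_sum_mulr F (G : int -> R) w :
  fiber_sum (fun x s => F x s * G (s%:Z - x%:Z)) w = fiber_sum F w * G w.
Proof.
rewrite /fiber_sum mulr_suml; apply: eq_bigr => x _.
by rewrite mulr_suml; apply: eq_bigr => s /eqP ->.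
Qed.

Lemma sum_by_diff (pi : 'I_mx.+1 -> 'I_ms.+1 -> R) (G : int -> R) :
  \sum_x \sum_s pi x s * G (s%:Z - x%:Z) = \sum_(w <- Wseq mx ms) xi_of pi w * G w.
Proof. by rewrite sum_fiber_sum; apply: eq_bigr => w _; rewrite fiber_sum_mulr. Qed.

Lemma sum_fiber_atS (f : 'I_ms.+1 -> R) x w :
  \sum_(s : 'I_ms.+1 | s%:Z - x%:Z == w) f s = atS f (w + x%:Z).
Proof.
under eq_bigl do rewrite subr_eq.
case: (w + x%:Z) => [n|n] /=; last by rewrite big_pred0.
case: ifP => n_lt; last first.
  by rewrite big_pred0 // => s; apply: contraFF n_lt => /eqP [<-].
rewrite (big_pred1 (inord n)) // => s /=.
by apply/eqP/eqP => [[<-]|->]; rewrite ?inord_val ?inordK.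
Qed.

Lemma atS_mul (f g : 'I_ms.+1 -> R) t :
  atS f t * atS g t = atS (fun s => f s * g s) t.
Proof. by case: t => [n|n] /=; [case: ifP; rewrite ?mul0r|rewrite mul0r]. Qed.

Lemma fiber_sum_pair F w :
  fiber_sum F w = \sum_(p : 'I_mx.+1 * 'I_ms.+1 | p.2%:Z - p.1%:Z == w) F p.1 p.2.
Proof. exact: pair_big_dep. Qed.

Implicit Types (pi : 'I_mx.+1 -> 'I_ms.+1 -> R)
  (a : 'I_mx.+1 -> 'I_ms.+1 -> 'I_my.+1 -> R) (b : int -> 'I_my.+1 -> R).

Lemma sum_b_numer a pi y :
  \sum_x \sum_s pi x s * a x s y = \sum_(w <- Wseq mx ms) b_numer a pi w y.
Proof.
rewrite sum_fiber_sum; apply: eq_bigr => w _.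
by apply: eq_bigr => x _; apply: eq_bigr => s _; rewrite mulrC.
Qed.

Lemma b_numer_atilde b pi w y : b_numer (atilde b) pi w y = xi_of pi w * b w y.
Proof.
rewrite -[xi_of pi w]/(fiber_sum pi w) -(fiber_sum_mulr _ (b^~ y)).
by apply: eq_bigr => x _; apply: eq_bigr => s _; rewrite mulrC.
Qed.

Lemma filt_iidE (PX : 'I_mx.+1 -> R) pi y a x' s' :
  filt (fun x' _ => PX x') pi y a x' s' =
  PX x' * b_numer a pi (s'%:Z - y%:Z) y / \sum_(w <- Wseq mx ms) b_numer a pi w y.
Proof.
rewrite /filt sum_fiber_sum; congr (_ / _).
rewrite /b_numer mulr_sumr; apply: eq_bigr => x _.
by rewrite -mulrA atS_mul sum_fiber_atS addrAC.
Qed.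

Lemma miterm_E (p c q : R) : miterm p c q = p * c * ln (c / q).
Proof. by rewrite /miterm; case: eqP => [->|]; rewrite ?mul0r. Qed.

Lemma MI_A_atilde b pi : MI_A (atilde b) pi = MI_B mx ms b (xi_of pi).
Proof.
rewrite /MI_A /MI_B /=.
set q := fun y => \sum_(w <- Wseq mx ms) xi_of pi w * b w y.
have out_atilde y : \sum_x \sum_s pi x s * atilde b x s y = q y.
  exact: (sum_by_diff pi (b^~ y)).
transitivity (\sum_x \sum_s pi x s *
    \sum_y b (s%:Z - x%:Z) y * ln (b (s%:Z - x%:Z) y / q y)).
  apply: eq_bigr => x _; apply: eq_bigr => s _; rewrite mulr_sumr.
  by apply: eq_bigr => y _; rewrite out_atilde miterm_E mulrA.
rewrite (sum_by_diff pi (fun w => \sum_y b w y * ln (b w y / q y))).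
apply: eq_bigr => w _; rewrite mulr_sumr.
by apply: eq_bigr => y _; rewrite miterm_E mulrA.
Qed.

Lemma pmf_le1 (T : finType) (p : T -> R) t : is_pmf p -> p t <= 1.
Proof. by case=> p_ge0 <-; rewrite (bigD1 t) //= lerDl sumr_ge0. Qed.

Lemma atilde_inA b : inB mx ms b -> inA (@atilde R mx my ms b).
Proof. by move=> b_inB x s; apply/b_inB/diff_mem_W. Qed.

Section Averaging.
Variables (pi : 'I_mx.+1 -> 'I_ms.+1 -> R)
  (a : 'I_mx.+1 -> 'I_ms.+1 -> 'I_my.+1 -> R) (b : int -> 'I_my.+1 -> R).
Hypotheses (pi_ge0 : forall x s, 0 <= pi x s) (a_inA : inA a).
Hypothesis b_avg : forall w, w \in Wseq mx ms -> xi_of pi w != 0 ->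
  forall y, b w y = b_numer a pi w y / xi_of pi w.
Hypothesis b_degen : forall w, w \in Wseq mx ms -> xi_of pi w = 0 ->
  pmf_on_Yo ms w (b w).

Lemma b_numer_ge0 w y : 0 <= b_numer a pi w y.
Proof.
apply: sumr_ge0 => x _; apply: sumr_ge0 => s _.
by rewrite mulr_ge0 // (a_inA x s).1.1.
Qed.

Lemma b_numer_le_xi w y : b_numer a pi w y <= xi_of pi w.
Proof.
apply: ler_sum => x _; apply: ler_sum => s _.
by rewrite ler_piMl // (pmf_le1 _ (a_inA x s).1).
Qed.

Lemma b_numerE w y : b_numer a pi w y = xi_of pi w * b w y.
Proof.
have [xi0|xi_neq0] := eqVneq (xi_of pi w) 0.
  by apply/eqP; rewrite xi0 mul0r eq_le b_numer_ge0 andbT -xi0 b_numer_le_xi.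
have w_in : w \in Wseq mx ms.
  by apply: contraNT xi_neq0 => wNW; apply/eqP/(fiber_sum_notin pi).
by rewrite b_avg // mulrC divfK.
Qed.

Lemma averaged_inB : inB mx ms b.
Proof.
move=> w w_in; have [xi0|xi_neq0] := eqVneq (xi_of pi w) 0; first exact: b_degen.
have sum_b_eq1 (P : pred 'I_my.+1) :
    (forall x s, s%:Z - x%:Z = w -> \sum_(y | P y) a x s y = 1) ->
    \sum_(y | P y) b w y = 1.
  move=> a_sum1; under eq_bigr do rewrite b_avg //.
  rewrite -mulr_suml; suff -> : \sum_(y | P y) b_numer a pi w y = xi_of pi w.
    by rewrite mulfV.
  rewrite /b_numer exchange_big; apply: eq_bigr => x _.
  rewrite exchange_big; apply: eq_bigr => s /eqP s_x.
  by rewrite -mulr_suml a_sum1 ?mul1r.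
split; [split|].
- move=> y; rewrite b_avg // divr_ge0 ?b_numer_ge0 //.
  by apply: sumr_ge0 => x _; apply: sumr_ge0.
- exact: (sum_b_eq1 xpredT (fun x s _ => (a_inA x s).1.2)).
- by apply: sum_b_eq1 => x s <-; apply: (a_inA x s).2.
Qed.

Lemma MI_B_le_MI_A : MI_B mx ms b (xi_of pi) <= MI_A a pi.
Proof.
rewrite /MI_A /MI_B /=.
set q := fun y => \sum_(w <- Wseq mx ms) xi_of pi w * b w y.
have out_a y : \sum_x \sum_s pi x s * a x s y = q y.
  by rewrite sum_b_numer; apply: eq_bigr => w _; apply: b_numerE.
have -> : \sum_x \sum_s \sum_y miterm (pi x s) (a x s y) (\sum_x' \sum_s' pi x' s' * a x' s' y)
    = \sum_(w <- Wseq mx ms) \sum_y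
        fiber_sum (fun x s => pi x s * a x s y * ln (a x s y / q y)) w.
  under eq_bigr do rewrite exchange_big.
  rewrite [LHS]exchange_big [RHS]exchange_big /=; apply: eq_bigr => y _.
  rewrite sum_fiber_sum; apply: eq_bigr => w _.
  by apply: eq_bigr => x _; apply: eq_bigr => s _; rewrite miterm_E out_a.
rewrite !big_seq; apply: ler_sum => w w_in; apply: ler_sum => y _.
have xi_pair : xi_of pi w =
    \sum_(p : 'I_mx.+1 * 'I_ms.+1 | p.2%:Z - p.1%:Z == w) pi p.1 p.2.
  exact: fiber_sum_pair.
have b_numer_pair : b_numer a pi w y =
    \sum_(p : 'I_mx.+1 * 'I_ms.+1 | p.2%:Z - p.1%:Z == w) pi p.1 p.2 * a p.1 p.2 y.
  rewrite -[b_numer _ _ _ _]/(fiber_sum (fun x s => a x s y * pi x s) w).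
  by rewrite fiber_sum_pair; apply: eq_bigr => p _; rewrite mulrC.
have b_numer_le_sum : b_numer a pi w y <= \sum_(w' <- Wseq mx ms) b_numer a pi w' y.
  rewrite (bigD1_seq w) ?undup_uniq //= lerDl.
  by apply: sumr_ge0 => w' _; apply: b_numer_ge0.
rewrite miterm_E xi_pair fiber_sum_pair.
apply: log_sum_le => [[x s]|[x s]||] //=; first exact: (a_inA x s).1.1.
  by rewrite -b_numer_pair -xi_pair b_numerE.
rewrite -b_numer_pair; apply: (le_trans b_numer_le_sum).
by rewrite (eq_bigr _ (fun w' _ => b_numerE w' y)) lexx.
Qed.

End Averaging.
End Model.

Unset Implicit Arguments. Set Strict Implicit.

Theorem lemma4 (R : realType) (mx my ms : nat) (PX : 'I_mx.+1 -> R)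
  (pi : 'I_mx.+1 -> 'I_ms.+1 -> R) (a : 'I_mx.+1 -> 'I_ms.+1 -> 'I_my.+1 -> R)
  (b : int -> 'I_my.+1 -> R) :
  (mx <= my)%N ->
  is_pmf PX ->
  pmfXS pi ->
  inA a ->
  (forall w, w \in Wseq mx ms -> xi_of pi w != 0 ->
     forall y, b w y = b_numer a pi w y / xi_of pi w) ->
  (forall w, w \in Wseq mx ms -> xi_of pi w = 0 -> pmf_on_Yo ms w (b w)) ->
  let Q := fun (x' _ : 'I_mx.+1) => PX x' in
  [/\ inB mx ms b,
      inA (@atilde R mx my ms b),
      (forall y x' s', filt Q pi y a x' s' = filt Q pi y (@atilde R mx my ms b) x' s'),
      MI_A (@atilde R mx my ms b) pi <= MI_A a pi
    & MI_A (@atilde R mx my ms b) pi = MI_B mx ms b (xi_of pi)].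
Proof.
move=> _ _ [pi_ge0 _] a_inA b_avg b_degen Q.
have b_numer_eq w y : b_numer a pi w y = b_numer (atilde b) pi w y.
  by rewrite b_numer_atilde (b_numerE pi_ge0 a_inA b_avg).
have b_inB := averaged_inB pi_ge0 a_inA b_avg b_degen.
split=> //.
- exact: atilde_inA.
- move=> y x' s'; rewrite /Q !filt_iidE b_numer_eq.
  by under eq_bigr do rewrite b_numer_eq.
- by rewrite MI_A_atilde (MI_B_le_MI_A pi_ge0 a_inA b_avg).
- exact: MI_A_atilde.
Qed.
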